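(* Let $G=(V,E)$ be an undirected graph, $k$ a positive integer, and $f:V\to\mathbb{Z}\cup\{-\infty\}$, $g:V\to\mathbb{Z}\cup\{+\infty\}$ with $f\le g$. A $k$-edge-connected $(f,g)$-bounded orientation $D$ of $G$ is decreasingly minimal among all $k$-edge-connected $(f,g)$-bounded orientations of $G$ if and only if there are no two nodes $s,t$ for which $\varrho_D(t)\ge\varrho_D(s)+2$, $\varrho_D(t)>f(t)$, $\varrho_D(s)<g(s)$, and $D$ contains $k+1$ arc-disjoint directed paths from $s$ to $t$.
   Context: $\varrho_D(v)$ is the number of arcs with head $v$; $D$ is $(f,g)$-bounded if $f(v)\le\varrho_D(v)\le g(v)$ for all $v$; $D$ is $k$-edge-connected if every non-empty proper subset of $V$ has at least $k$ entering arcs. Decreasingly minimal: in-degree vector with largest component as small as possible within the class, then second largest, etc. *)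

From mathcomp Require Import all_boot all_order all_algebra.
Set Implicit Arguments. Unset Strict Implicit. Unset Printing Implicit Defensive.
Import Order.TTheory GRing.Theory Num.Theory.

(* An undirected (multi)graph G = (V, E): V, E finite types, [ends e] = the two
   end-nodes of edge e (in an arbitrary reference order).
   An orientation D of G: D e = true orients e from (ends e).1 to (ends e).2,
   D e = false orients it from (ends e).2 to (ends e).1. *)

Section Orient.
Variables (V E : finType) (ends : E -> V * V).

Definition ahead (D : {ffun E -> bool}) (e : E) : V :=
  if D e then (ends e).2 else (ends e).1.
Definition atail (D : {ffun E -> bool}) (e : E) : V :=
  if D e then (ends e).1 else (ends e).2.

Definition indeg (D : {ffun E -> bool}) (v : V) : nat :=
  #|[set e | ahead D e == v]|.

(* f : V -> Z u {-oo}, encoded with None = -oo ;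
   g : V -> Z u {+oo}, encoded with None = +oo. *)
Definition lower_ok (f : V -> option int) (v : V) (n : nat) : bool :=
  if f v is Some a then (a <= n%:Z)%R else true.
Definition upper_ok (g : V -> option int) (v : V) (n : nat) : bool :=
  if g v is Some b then (n%:Z <= b)%R else true.

Definition above_f (f : V -> option int) (v : V) (n : nat) : bool :=
  if f v is Some a then (a < n%:Z)%R else true.
Definition below_g (g : V -> option int) (v : V) (n : nat) : bool :=
  if g v is Some b then (n%:Z < b)%R else true.

Definition f_le_g (f g : V -> option int) : Prop :=
  forall v, match f v, g v with Some a, Some b => (a <= b)%R | _, _ => true end.

Definition fg_bounded (f g : V -> option int) (D : {ffun E -> bool}) : Prop :=
  forall v, lower_ok f v (indeg D v) /\ upper_ok g v (indeg D v).

Definition k_edge_connected (k : nat) (D : {ffun E -> bool}) : Prop :=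
  forall X : {set V}, X != set0 -> X != setT ->
    k <= #|[set e | (ahead D e \in X) && (atail D e \notin X)]|.

Definition feasible (k : nat) (f g : V -> option int) (D : {ffun E -> bool}) : Prop :=
  k_edge_connected k D /\ fg_bounded f g D.

Definition degseq (D : {ffun E -> bool}) : seq nat :=
  sort geq [seq indeg D v | v <- enum V].

Fixpoint lexle (s t : seq nat) : bool :=
  match s, t with
  | [::], _ => true
  | _ :: _, [::] => false
  | x :: s', y :: t' => (x < y) || ((x == y) && lexle s' t')
  end.

Definition decmin (k : nat) (f g : V -> option int) (D : {ffun E -> bool}) : Prop :=
  feasible k f g D /\
  forall D' : {ffun E -> bool}, feasible k f g D' -> lexle (degseq D) (degseq D').

Fixpoint diwalk (D : {ffun E -> bool}) (x t : V) (p : seq E) : bool :=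
  match p with
  | [::] => x == t
  | e :: p' => (atail D e == x) && diwalk D (ahead D e) t p'
  end.

Definition dipath (D : {ffun E -> bool}) (s t : V) (p : seq E) : bool :=
  diwalk D s t p && uniq (s :: map (ahead D) p).

Definition arc_disjoint_paths (D : {ffun E -> bool}) (m : nat) (s t : V) : Prop :=
  exists P : 'I_m -> seq E,
    (forall i, dipath D s t (P i)) /\
    (forall i j, i != j -> forall e, e \in P i -> e \notin P j).

End Orient.

(* Reversing a directed s-t path moves one unit of in-degree from t to s, and it keeps the
   orientation k-edge-connected exactly when every set containing t but not s is entered by
   at least k+1 arcs, i.e. (Menger) when there are k+1 arc-disjoint s-t paths.  If
   rho(t) >= rho(s) + 2 and the bounds allow it, the reversal makes the sorted in-degree
   vector lexicographically smaller, so such a pair contradicts decreasing minimality.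

   Conversely, let D admit no such pair and let D' be feasible while the degree sequence of
   D is not lexicographically at most that of D'.  Take t with rho_D'(t) < rho_D(t) and rho_D(t) maximal.  Uncrossing the
   sets that contain t and are entered by only k arcs of D gives s with rho_D(s) < rho_D'(s)
   and k+1 arc-disjoint s-t paths in D, hence rho_D(t) <= rho_D(s) + 1.  The same argument
   with D and D' exchanged gives t' with rho_D'(t') < rho_D(t') and k+1 arc-disjoint
   t'-s paths in D'; since rho_D'(t') < rho_D'(s), reversing one of them yields a feasible
   orientation closer to D in l1-distance whose degree sequence is not larger than that of
   D'.  Induction on the l1-distance finishes the proof. *)

From Pilot Require Import Defs.
From mathcomp Require Import all_boot all_order all_algebra.
From mathcomp Require Import zify.
Set Implicit Arguments. Unset Strict Implicit. Unset Printing Implicit Defensive.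

Lemma card_set_sum (T : finType) (P : pred T) : #|[set x | P x]| = \sum_x P x.
Proof. by rewrite -sum1dep_card big_mkcond. Qed.

Lemma sum_eq_mem (T : finType) (a : T) (A : {set T}) :
  \sum_(x in A) (a == x : nat) = (a \in A).
Proof.
rewrite big_mkcond (bigD1 a) //= eqxx big1 ?addn0; first by case: (a \in A).
by move=> x /negbTE; rewrite eq_sym => ->; case: (x \in A).
Qed.

Lemma sum_setC (T : finType) (A : {set T}) (F : T -> nat) :
  \sum_x F x = \sum_(x in A) F x + \sum_(x in ~: A) F x.
Proof. by rewrite (bigID (mem A)); congr (_ + _); apply: eq_bigl => x; rewrite ?inE. Qed.

Lemma ltn_sum_cond (T : finType) (P : pred T) (F G : T -> nat) x :
    (forall y, P y -> F y <= G y) -> P x -> F x < G x ->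
  \sum_(y | P y) F y < \sum_(y | P y) G y.
Proof.
move=> le_FG Px lt_x; rewrite (bigD1 x) //= [X in _ < X](bigD1 x) //=.
by rewrite -addSn leq_add //; apply: leq_sum => y /andP [Py _]; apply: le_FG.
Qed.

Section UnionClosedFamily.
Variables (T : finType) (P : pred {set T}) (a b : T -> nat).
Hypothesis P_union : forall A B, P A -> P B -> A :&: B != set0 -> P (A :|: B).
Hypothesis P_sum : forall A, P A -> \sum_(x in A) a x <= \sum_(x in A) b x.

Let U := \bigcup_(A | P A) A.
(* The largest members containing a given point partition the union of the family. *)
Let max_member x := \bigcup_(A | P A && (x \in A)) A.

Lemma max_member_P x : x \in U -> P (max_member x) /\ x \in max_member x.
Proof.
case/bigcupP => A PA xA; have x_max : x \in max_member x.
  by apply/bigcupP; exists A; rewrite ?PA.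
suff /predU1P [empty | /andP //] :
    (max_member x == set0) || (P (max_member x) && (x \in max_member x)).
  by move: x_max; rewrite empty inE.
apply: (big_ind (fun Z => (Z == set0) || (P Z && (x \in Z)))) => [||Z ->];
  rewrite ?eqxx ?orbT //.
move=> Z1 Z2 /predU1P [-> | /andP [P1 x1]]; first by rewrite set0U.
move=> /predU1P [-> | /andP [P2 x2]]; first by rewrite setU0 P1 x1 orbT.
rewrite P_union ?inE ?x1 /= ?orbT //; apply/set0Pn; exists x; by rewrite inE x1 x2.
Qed.

Lemma max_member_eq x y : x \in U -> y \in max_member x -> max_member y = max_member x.
Proof.
move=> xU y_max; have [Px x_max] := max_member_P xU.
have yU : y \in U by apply/bigcupP; exists (max_member x).
have Py := (max_member_P yU).1.
have sub_xy : max_member x \subset max_member y.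
  by apply/subsetP => z zx; apply/bigcupP; exists (max_member x); rewrite // Px y_max.
have sub_yx : max_member y \subset max_member x.
  apply/subsetP => z zy; apply/bigcupP; exists (max_member y) => //.
  by rewrite Py (subsetP sub_xy _ x_max).
by apply/eqP; rewrite eqEsubset sub_xy sub_yx.
Qed.

Lemma sum_bigcup_le : \sum_(x in U) a x <= \sum_(x in U) b x.
Proof.
rewrite !(partition_big_imset max_member) /=; apply: leq_sum => _ /imsetP [x xU ->].
have block y : (y \in U) && (max_member y == max_member x) = (y \in max_member x).
  apply/andP/idP => [[yU /eqP <-] | y_max]; first exact: (max_member_P yU).2.
  split; last by rewrite (max_member_eq xU y_max).
  by apply/bigcupP; exists (max_member x); rewrite ?(max_member_P xU).1.
by rewrite !(eq_bigl _ _ block); apply: P_sum; case: (max_member_P xU).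
Qed.

End UnionClosedFamily.

(** * Decreasingly sorted sequences *)

Lemma geq_trans : transitive geq.
Proof. by move=> m n p /= mn nm; apply: leq_trans nm mn. Qed.

Lemma geq_anti : antisymmetric geq.
Proof. by move=> m n /= /andP [nm mn]; apply/eqP; rewrite eqn_leq nm mn. Qed.

Lemma geq_total : total geq.
Proof. by move=> m n; apply: leq_total. Qed.

Lemma lexle_refl s : lexle s s.
Proof. by elim: s => //= x s ->; rewrite eqxx orbT. Qed.

Lemma lexle_trans s1 s2 s3 : lexle s1 s2 -> lexle s2 s3 -> lexle s1 s3.
Proof.
elim: s1 s2 s3 => [|x s IH] [|y t] [|z u] //=.
case/orP => [xy | /andP [/eqP <- st]]; case/orP => [yz | /andP [/eqP <- tu]].
- by rewrite (ltn_trans xy yz).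
- by rewrite xy.
- by rewrite yz.
- by rewrite eqxx (IH _ _ st tu) orbT.
Qed.

Lemma lexle_total s t : lexle s t || lexle t s.
Proof.
elim: s t => [|x s IH] [|y t] //=; rewrite [y == x]eq_sym.
by case: ltngtP => //= _; apply: IH.
Qed.

Fixpoint ins (x : nat) (s : seq nat) : seq nat :=
  if s is y :: s' then (if y <= x then x :: s else y :: ins x s') else [:: x].

Lemma perm_ins x s : perm_eq (ins x s) (x :: s).
Proof.
elim: s => [|y s IH] //=; case: leqP => _ //.
by rewrite perm_sym (perm_catCA [:: x] [:: y] s) /= perm_cons perm_sym.
Qed.

Lemma head_ins x s : head 0 (ins x s) = maxn x (head 0 s).
Proof. by case: s => [|y s] /=; [rewrite maxn0 | case: leqP => /= yx; lia]. Qed.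

Lemma path_ins x y s : path geq y s -> x <= y -> path geq y (ins x s).
Proof.
elim: s y => [|z s IH] y /=; first by move=> _ ->.
case/andP => yz path_zs xy; case: leqP => [zx | xz] /=; first by rewrite xy zx path_zs.
by rewrite yz IH // ltnW.
Qed.

Lemma sorted_ins x s : sorted geq s -> sorted geq (ins x s).
Proof.
case: s => [|y s] //= path_ys; case: leqP => [yx | xy] /=; first by rewrite yx.
by rewrite path_ins // ltnW.
Qed.

Lemma sort_geq_sorted s : sorted geq (sort geq s).
Proof. exact: (@sort_sorted nat geq geq_total). Qed.

Lemma sort_geq_cons x s : sort geq (x :: s) = ins x (sort geq s).
Proof.
apply: (sorted_eq geq_trans geq_anti).
- exact: sort_geq_sorted.
- exact/sorted_ins/sort_geq_sorted.
- by rewrite perm_sort perm_sym (permPl (perm_ins _ _)) perm_cons perm_sort.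
Qed.

Lemma ins_ge_head x s : head 0 s <= x -> ins x s = x :: s.
Proof. by case: s => //= y s ->. Qed.

Lemma ins_le_cons x y s : sorted geq (y :: s) -> x <= y -> ins x (y :: s) = y :: ins x s.
Proof.
move=> sorted_ys xy /=; case: leqP => // yx.
have -> : x = y by apply/eqP; rewrite eqn_leq xy yx.
by rewrite ins_ge_head //; case: s sorted_ys => //= z s /andP [].
Qed.

Lemma lexle_ins_gt a b c d s : sorted geq s -> b <= a -> c < a -> d < a ->
  ~~ lexle (ins a (ins b s)) (ins c (ins d s)).
Proof.
move=> + ba ca da.
have top u : head 0 u < a -> ~~ lexle (ins a (ins b u)) (ins c (ins d u)).
  move=> hu; rewrite ins_ge_head; last by rewrite head_ins geq_max ba ltnW.
  have : head 0 (ins c (ins d u)) < a by rewrite !head_ins !gtn_max ca da hu.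
  by case: (ins c (ins d u)) => [|z w] //= za; rewrite ltnNge (ltnW za) (gtn_eqF za).
elim: s => [|y s IH] sorted_s; first by apply: top; apply: leq_ltn_trans ca.
have [ya | ay] := ltnP y a; first exact: top.
have [by_ cy dy] : [/\ b <= y, c <= y & d <= y] by split; lia.
have sorted_ins_cons x : x <= y -> sorted geq (y :: ins x s).
  by move=> xy; rewrite -ins_le_cons ?sorted_ins.
rewrite (ins_le_cons sorted_s by_) (ins_le_cons sorted_s dy).
rewrite (ins_le_cons (sorted_ins_cons _ by_) ay) (ins_le_cons (sorted_ins_cons _ dy) cy) /=.
by rewrite ltnn eqxx; apply: IH (path_sorted sorted_s).
Qed.

Lemma ins_comm x y s : sorted geq s -> ins x (ins y s) = ins y (ins x s).
Proof.
move=> sorted_s; rewrite -(sorted_sort geq_trans sorted_s) -!sort_geq_cons.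
apply/(perm_sortP geq_total geq_trans geq_anti).
by rewrite (perm_catCA [:: x] [:: y] s).
Qed.

Section SortedShift.
Variables (V : finType) (m m1 : V -> nat) (s t : V).
Hypotheses (shift : forall v, m1 v + (v == t) = m v + (v == s)) (s_neq_t : s != t).

Let rest := rem s (rem t (enum V)).

Lemma sort_map_split (h : V -> nat) :
  sort geq (map h (enum V)) = ins (h t) (ins (h s) (sort geq (map h rest))).
Proof.
have perm_enum : perm_eq (enum V) (t :: s :: rest).
  apply: (perm_trans (perm_to_rem (mem_enum _ t))); rewrite perm_cons perm_to_rem //.
  by rewrite (mem_rem_uniq _ (enum_uniq _)) inE s_neq_t mem_enum.
rewrite -!sort_geq_cons; apply/(perm_sortP geq_total geq_trans geq_anti).
exact: perm_map perm_enum.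
Qed.

Lemma map_rest_shift : map m1 rest = map m rest.
Proof.
apply/eq_in_map => v; rewrite (mem_rem_uniq _ (rem_uniq _ (enum_uniq _))) !inE.
rewrite (mem_rem_uniq _ (enum_uniq _)) inE => /and3P [vs vt _].
by have := shift v; rewrite (negbTE vs) (negbTE vt) !addn0.
Qed.

Lemma sort_shift_lt : m s + 2 <= m t ->
  ~~ lexle (sort geq (map m (enum V))) (sort geq (map m1 (enum V))).
Proof.
move=> gap; rewrite !sort_map_split map_rest_shift.
have := shift s; have := shift t; rewrite !eqxx eq_sym (negbTE s_neq_t) => ht hs.
by apply: lexle_ins_gt; rewrite ?sort_geq_sorted //; lia.
Qed.

Lemma sort_shift_le : m s < m t ->
  lexle (sort geq (map m1 (enum V))) (sort geq (map m (enum V))).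
Proof.
move=> lt_st; have [gap | ] := leqP (m s + 2) (m t).
  by have := lexle_total (sort geq (map m1 (enum V))) (sort geq (map m (enum V)));
    rewrite (negbTE (sort_shift_lt gap)) orbF.
move=> no_gap; rewrite !sort_map_split map_rest_shift.
have := shift s; have := shift t; rewrite !eqxx eq_sym (negbTE s_neq_t) => ht hs.
have [-> ->] : m1 t = m s /\ m1 s = m t by lia.
by rewrite ins_comm ?lexle_refl ?sort_geq_sorted.
Qed.

End SortedShift.

Section Bounds.
Variables (V : finType) (f g : V -> option int) (v : V).

Lemma lower_ok_mono m n : lower_ok f v m -> m <= n -> lower_ok f v n.
Proof. by rewrite /lower_ok; case: (f v) => // a; lia. Qed.

Lemma upper_ok_mono m n : upper_ok g v n -> m <= n -> upper_ok g v m.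
Proof. by rewrite /upper_ok; case: (g v) => // b; lia. Qed.

Lemma lower_ok_pred n : above_f f v n -> lower_ok f v n.-1.
Proof. by rewrite /above_f /lower_ok; case: (f v) => // a; lia. Qed.

Lemma upper_ok_succ n : below_g g v n -> upper_ok g v n.+1.
Proof. by rewrite /below_g /upper_ok; case: (g v) => // b; lia. Qed.

Lemma above_f_lt m n : lower_ok f v m -> m < n -> above_f f v n.
Proof. by rewrite /above_f /lower_ok; case: (f v) => // a; lia. Qed.

Lemma below_g_lt m n : upper_ok g v n -> m < n -> below_g g v m.
Proof. by rewrite /below_g /upper_ok; case: (g v) => // b; lia. Qed.

End Bounds.

Definition l1_dist (T : finType) (m m' : T -> nat) := \sum_x ((m x - m' x) + (m' x - m x)).

Lemma l1_dist_shift_lt (T : finType) (m0 m m1 : T -> nat) s t :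
    (forall x, m1 x + (x == t) = m x + (x == s)) -> m s < m0 s -> m0 t < m t ->
  l1_dist m0 m1 < l1_dist m0 m.
Proof.
move=> shift src tgt; have s_neq_t : s != t by apply: contraTneq src => ->; lia.
apply: (ltn_sum_cond (P := fun _ => true) (x := t)) => // [x _|].
  have := shift x; have [-> | xs] := eqVneq x s; first by rewrite (negbTE s_neq_t); lia.
  by case: eqVneq => [-> | _] /=; lia.
by have := shift t; rewrite eqxx eq_sym (negbTE s_neq_t); lia.
Qed.

(** * Counting arcs of orientations *)

Section Orientations.
Variables (V E : finType) (ends : E -> V * V).
Local Notation ahead := (ahead ends).
Local Notation atail := (atail ends).
Local Notation indeg := (indeg ends).
Local Notation diwalk := (diwalk ends).
Local Notation dipath := (dipath ends).
Implicit Types (D : {ffun E -> bool}) (X R : {set V}) (p q : seq E).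

Definition enters D X e := (ahead D e \in X) && (atail D e \notin X).
Definition leaves D X e := (atail D e \in X) && (ahead D e \notin X).
Definition ent D X := #|[set e | enters D X e]|.
Definition inner X := #|[set e | ((ends e).1 \in X) && ((ends e).2 \in X)]|.
Definition flip D (S : {set E}) : {ffun E -> bool} :=
  [ffun e => if e \in S then ~~ D e else D e].

Lemma enters_setC D X e : enters D (~: X) e = leaves D X e.
Proof. by rewrite /enters /leaves !inE negbK andbC. Qed.

Lemma ent_submod D X Y : ent D (X :&: Y) + ent D (X :|: Y) <= ent D X + ent D Y.
Proof.
rewrite /ent !card_set_sum -!big_split /=; apply: leq_sum => e _; rewrite /enters !inE.
by case: (ahead D e \in X); case: (ahead D e \in Y); case: (atail D e \in X);
  case: (atail D e \in Y).
Qed.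

Lemma sum_indeg D X : \sum_(v in X) indeg D v = ent D X + inner X.
Proof.
rewrite /Defs.indeg; under eq_bigr do rewrite card_set_sum.
rewrite exchange_big /= /ent /inner !card_set_sum -big_split; apply: eq_bigr => e _.
rewrite sum_eq_mem /enters /Defs.ahead /Defs.atail; case: (D e); case: (ends e) => a b /=;
  by case: (a \in X); case: (b \in X).
Qed.

Lemma sum_indeg_total D : \sum_v indeg D v = #|E|.
Proof.
have -> : \sum_v indeg D v = \sum_(v in [set: V]) indeg D v.
  by apply: eq_bigl => v; rewrite inE.
rewrite sum_indeg /ent /inner -cardsT.
have -> : [set e | enters D [set: V] e] = set0 by apply/setP => e; rewrite /enters !inE.
by rewrite cards0 add0n; congr #|pred_of_set _|; apply/setP => e; rewrite !inE.
Qed.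

Lemma indeg_ent D v :
  indeg D v = ent D [set v] + #|[set e | ((ends e).1 == v) && ((ends e).2 == v)]|.
Proof.
rewrite /Defs.indeg /ent !card_set_sum -big_split /=; apply: eq_bigr => e _.
rewrite /enters !inE /Defs.ahead /Defs.atail; case: (D e); case: (ends e) => a b /=;
  by case: (a == v); case: (b == v).
Qed.

Lemma ahead_flip D S e : ahead (flip D S) e = if e \in S then atail D e else ahead D e.
Proof. by rewrite /Defs.ahead /Defs.atail ffunE; case: (e \in S); case: (D e). Qed.

Lemma atail_flip D S e : atail (flip D S) e = if e \in S then ahead D e else atail D e.
Proof. by rewrite /Defs.ahead /Defs.atail ffunE; case: (e \in S); case: (D e). Qed.

Lemma ent_flip D S X :
  ent (flip D S) X + \sum_(e in S) enters D X e = ent D X + \sum_(e in S) leaves D X e.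
Proof.
rewrite /ent !card_set_sum !(big_mkcond (fun e => e \in S)) -!big_split /=.
apply: eq_bigr => e _; rewrite /enters /leaves ahead_flip atail_flip.
by case: (e \in S); case: (ahead D e \in X); case: (atail D e \in X).
Qed.

Lemma diwalk_count D x y p X : diwalk D x y p ->
  count (enters D X) p + (x \in X) = count (leaves D X) p + (y \in X).
Proof.
elim: p x => [|e p IH] x /=; first by move/eqP->.
case/andP=> /eqP <- /IH; rewrite /enters /leaves.
by case: (ahead D e \in X); case: (atail D e \in X) => /=; lia.
Qed.

Lemma dipath_uniq D s t p : dipath D s t p -> uniq p.
Proof. by case/andP=> _ /= /andP[_ /map_uniq]. Qed.

Lemma ent_reverse D s t p X : dipath D s t p ->
  ent (flip D [set e in p]) X + (t \in X) = ent D X + (s \in X).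
Proof.
move=> dp; have up := dipath_uniq dp; case/andP: dp => /(diwalk_count X) walk _.
have := ent_flip D [set e in p] X.
have sum_count (P : pred E) : \sum_(e in [set e in p]) P e = count P p.
  rewrite (eq_bigl (mem p)); last by move=> e; rewrite inE.
  by rewrite -big_uniq // -sum1_count [RHS]big_mkcond.
rewrite !sum_count; lia.
Qed.

Definition indeg_shift j s t D D1 :=
  forall v, indeg D1 v + j * (v == t) = indeg D v + j * (v == s).

Lemma indeg_reverse D s t p : dipath D s t p -> indeg_shift 1 s t D (flip D [set e in p]).
Proof.
move=> dp v; have := ent_reverse [set v] dp; rewrite !indeg_ent !inE ![_ == v]eq_sym.
lia.
Qed.

Lemma indeg_shift_add i j s t D1 D2 D3 : indeg_shift i s t D1 D2 ->
  indeg_shift j s t D2 D3 -> indeg_shift (i + j) s t D1 D3.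
Proof. by move=> h12 h23 v; have := h12 v; have := h23 v; rewrite !mulnDl; lia. Qed.

Lemma indeg_shift_sub i j s t D1 D2 D3 : indeg_shift i s t D1 D2 ->
  indeg_shift (i + j) s t D1 D3 -> indeg_shift j s t D2 D3.
Proof. by move=> h12 h13 v; have := h12 v; have := h13 v; rewrite !mulnDl; lia. Qed.

Lemma ent_shift j s t D D1 X : indeg_shift j s t D D1 ->
  ent D1 X + j * (t \in X) = ent D X + j * (s \in X).
Proof.
move=> sh; have : \sum_(v in X) (indeg D1 v + j * (v == t)) =
                  \sum_(v in X) (indeg D v + j * (v == s)).
  by apply: eq_bigr => v _; apply: sh.
have sum_eq a : \sum_(v in X) (v == a : nat) = (a \in X).
  by under eq_bigr do rewrite eq_sym; apply: sum_eq_mem.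
rewrite !big_split /= !sum_indeg -!big_distrr /= !sum_eq; lia.
Qed.

Lemma flip_in D (S : {set E}) e : e \in S -> flip D S e = ~~ D e.
Proof. by rewrite ffunE => ->. Qed.

Lemma flip_notin D (S : {set E}) e : e \notin S -> flip D S e = D e.
Proof. by rewrite ffunE => /negbTE ->. Qed.

Lemma dipath_agree D D1 s t p : {in p, D1 =1 D} -> dipath D1 s t p = dipath D s t p.
Proof.
have ends_eq e : D1 e = D e -> ahead D1 e = ahead D e /\ atail D1 e = atail D e.
  by rewrite /Defs.ahead /Defs.atail => ->.
move=> agree; rewrite /Defs.dipath.
have -> : map (ahead D1) p = map (ahead D) p.
  by apply/eq_in_map => e /agree /ends_eq [].
congr (_ && _); elim: p s agree => [|e p IH] x //= agree.
have [-> ->] := ends_eq e (agree e (mem_head e p)).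
by rewrite IH // => e' e'p; apply: agree; rewrite inE e'p orbT.
Qed.

Lemma enters_changed D D1 R e : enters D1 R e -> ~~ enters D R e ->
  (D1 e != D e) && leaves D R e.
Proof.
rewrite /enters /leaves /Defs.ahead /Defs.atail.
by case: (D1 e); case: (D e); case: ((ends e).1 \in R); case: ((ends e).2 \in R).
Qed.

Section Reachability.
Variables (D : {ffun E -> bool}) (F : {set E}) (s : V).

Definition arc_within : rel V :=
  fun u w => [exists e in F, (atail D e == u) && (ahead D e == w)].

Lemma arcs_of_path x vs : path arc_within x vs ->
  exists2 q, diwalk D x (last x vs) q & map (ahead D) q = vs /\ {subset q <= F}.
Proof.
elim: vs x => [|y vs IH] x /=; first by exists [::] => /=.
case/andP => /existsP [e /andP [eF /andP [/eqP <- /eqP <-]]] /IH [q walk [heads qF]].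
exists (e :: q); rewrite /= ?eqxx ?walk ?heads //; split=> // e'.
by rewrite inE => /orP [/eqP -> | /qF].
Qed.

Lemma dipath_within t :
    (forall R, s \in R -> t \notin R -> exists2 e, e \in F & leaves D R e) ->
  exists2 p, dipath D s t p & {subset p <= F}.
Proof.
move=> cut; have : t \in [set v | connect arc_within s v].
  apply/negPn/negP => tR; have sR : s \in [set v | connect arc_within s v].
    by rewrite inE connect0.
  have [e eF] := cut _ sR tR; case/andP; rewrite !inE => reach_tail; apply/negP/negPn.
  by apply: (connect_trans reach_tail); apply: connect1; apply/existsP; exists e;
    rewrite eF !eqxx.
rewrite inE => /connectP [vs walk ->]; case: (shortenP walk) => vs' walk' uvs _.
have [q qwalk [heads qF]] := arcs_of_path walk'.
by exists q; rewrite // /Defs.dipath qwalk heads.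
Qed.

End Reachability.

(** * Menger's theorem *)

Definition local_conn D j s t := forall X, t \in X -> s \notin X -> j <= ent D X.

Lemma diwalk_enters D x y p X : diwalk D x y p -> x \notin X -> y \in X ->
  exists2 e, e \in p & enters D X e.
Proof.
move=> /(diwalk_count X) walk xX yX; apply/hasP; rewrite has_count.
by move: walk; rewrite (negbTE xX) yX /=; lia.
Qed.

Lemma local_conn_of_paths D j s t : arc_disjoint_paths ends D j s t -> local_conn D j s t.
Proof.
case=> P [dP disjP] X tX sX.
have /fin_all_exists [h hP] i : exists e, (e \in P i) && enters D X e.
  by case/andP: (dP i) => /diwalk_enters /(_ sX tX) [e ep eX]; exists e; rewrite ep.
have h_inj : injective h.
  move=> i i' hii'; apply/eqP/negPn/negP => /disjP disj_ii'.
  have /andP [hi _] := hP i; have /andP [hi' _] := hP i'.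
  by move: (disj_ii' _ hi); rewrite hii' hi'.
rewrite -[j]card_ord -(card_imset _ h_inj); apply: subset_leq_card.
by apply/subsetP => _ /imsetP [i _ ->]; rewrite inE; case/andP: (hP i).
Qed.

Lemma local_conn_reverse j D s t p : dipath D s t p -> local_conn D j.+1 s t ->
  local_conn (flip D [set e in p]) j s t.
Proof.
move=> dp conn X tX sX; have := ent_reverse X dp; have := conn X tX sX.
by rewrite tX (negbTE sX); lia.
Qed.

(* Reversing an s-t path lowers the in-degree of every set separating t from s by exactly
   one, so j reversals are possible; the arcs they reversed then split into j arc-disjoint
   s-t paths of the original orientation. *)
Lemma shift_of_local_conn j D s t : local_conn D j s t ->
  exists D1, indeg_shift j s t D D1.
Proof.
elim: j D => [|j IH] D conn; first by exists D => v; rewrite !mul0n.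
have [p dp _] : exists2 p, dipath D s t p & {subset p <= [set: E]}.
  apply: dipath_within => R sR tR.
  have : 0 < ent D (~: R) by apply: leq_trans (conn _ _ _); rewrite ?inE ?sR.
  by case/card_gt0P => e; rewrite inE enters_setC; exists e; rewrite ?inE.
have [D1 sh] := IH _ (local_conn_reverse dp conn).
by exists D1; rewrite -add1n; apply: indeg_shift_add (indeg_reverse dp) sh.
Qed.

Lemma paths_of_shift j D D1 s t : indeg_shift j s t D D1 ->
  exists Ps : seq (seq E), [/\ size Ps = j,
    forall p, p \in Ps -> dipath D s t p /\ {subset p <= [set e | D1 e != D e]}
    & pairwise (fun p q => [disjoint p & q]) Ps].
Proof.
elim: j D => [|j IH] D sh; first by exists [::].
set F := [set e | D1 e != D e].
have [q dq qF] : exists2 q, dipath D s t q & {subset q <= F}.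
  apply: dipath_within => R sR tR; have := ent_shift R sh; rewrite sR (negbTE tR).
  have [/subset_leq_card|] := boolP ([set e | enters D1 R e] \subset [set e | enters D R e]).
    by rewrite -/(ent D1 R) -/(ent D R); lia.
  case/subsetPn => e; rewrite !inE => /enters_changed h /h /andP [changed out] _.
  by exists e; rewrite ?inE.
have sh' := indeg_shift_sub (indeg_reverse dq) (sh : indeg_shift (1 + j) _ _ _ _).
have [Ps [size_Ps PsP disj_Ps]] := IH _ sh'.
have off_q p e : p \in Ps -> e \in p -> e \notin q /\ flip D [set e in q] e = D e.
  move=> pPs ep; have e_notin_q : e \notin q.
    apply: contraL ((PsP p pPs).2 e ep) => e_in_q; rewrite !inE flip_in ?inE // negbK.
    by move: (qF e e_in_q); rewrite inE; case: (D1 e); case: (D e).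
  by split=> //; rewrite flip_notin ?inE.
exists (q :: Ps); split; rewrite /= ?size_Ps //.
  move=> p; rewrite inE => /predU1P [-> // | pPs].
  have agree : {in p, flip D [set e in q] =1 D} by move=> e /(off_q p e pPs) [].
  have [dp pF] := PsP p pPs; rewrite -(dipath_agree _ _ agree); split=> // e ep.
  by move: (pF e ep); rewrite !inE (agree e ep).
rewrite disj_Ps andbT; apply/allP => p pPs; rewrite disjoint_sym.
by apply/pred0P => e /=; apply/andP => -[/(off_q p e pPs) [/negP]].
Qed.

Lemma paths_of_local_conn D j s t : local_conn D j s t -> arc_disjoint_paths ends D j s t.
Proof.
case/shift_of_local_conn => D1 /paths_of_shift [Ps [size_Ps PsP disj_Ps]].
exists (fun i => nth [::] Ps i); split=> [i | i i' neq e ei].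
  by case: (PsP (nth [::] Ps i)); rewrite // mem_nth ?size_Ps.
have disj (n n' : 'I_j) : n < n' -> [disjoint nth [::] Ps n & nth [::] Ps n'].
  by move/(pairwiseP [::]): disj_Ps => /(_ n n'); rewrite !inE size_Ps; apply.
have [lt | gt | eq] := ltngtP i i'.
- by rewrite (disjointFr (disj _ _ lt) ei).
- by rewrite (disjointFl (disj _ _ gt) ei).
- by move: neq; rewrite (val_inj eq) eqxx.
Qed.

(** * Decreasingly minimal orientations *)

Section Exchange.
Variables (k : nat) (D D' : {ffun E -> bool}) (t : V).
Hypotheses (kD : k_edge_connected ends k D) (kD' : k_edge_connected ends k D').

Definition cotight C := [&& C != set0, t \notin C & ent D (~: C) <= k].

Lemma cotightU C1 C2 : cotight C1 -> cotight C2 -> C1 :&: C2 != set0 -> cotight (C1 :|: C2).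
Proof.
case/and3P => C1_0 tC1 ent1; case/and3P => _ tC2 ent2 C12_0.
have : k <= ent D (~: (C1 :&: C2)).
  apply: kD; first by apply/set0Pn; exists t; rewrite !inE negb_and tC1.
  by apply: contraNneq C12_0 => /(congr1 (@setC _)); rewrite setCK setCT => ->.
have := ent_submod D (~: C1) (~: C2); rewrite -setCU -setCI => submod kC12.
by rewrite /cotight setU_eq0 negb_and C1_0 inE negb_or tC1 tC2 /=; lia.
Qed.

Lemma cotight_sum C : cotight C -> \sum_(v in C) indeg D' v <= \sum_(v in C) indeg D v.
Proof.
case/and3P => C_0 tC entC; have : k <= ent D' (~: C).
  apply: kD'; first by apply/set0Pn; exists t; rewrite inE.
  by apply: contraNneq C_0 => /(congr1 (@setC _)); rewrite setCK setCT => ->.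
have := sum_setC C (indeg D); have := sum_setC C (indeg D').
by rewrite !sum_indeg_total !sum_indeg; lia.
Qed.

(* If every node where D' has larger in-degree than D lay in a cotight set, then, as the
   maximal cotight sets are disjoint and carry no more D'-in-degree than D-in-degree, the
   total in-degree of D' would be smaller than that of D. *)
Lemma exists_surplus_source : indeg D' t < indeg D t ->
  exists2 s, indeg D s < indeg D' s & local_conn D k.+1 s t.
Proof.
move=> deficit_t; set U := \bigcup_(C | cotight C) C.
have [/existsP [s /andP [surplus_s sU]] | /existsPn surplus_in_U] :=
  boolP [exists s, (indeg D s < indeg D' s) && (s \notin U)].
  exists s => // X tX sX; rewrite ltnNge; apply: contra sU => entX.
  apply/bigcupP; exists (~: X); last by rewrite inE.
  rewrite /cotight setCK entX inE tX /= andbT; apply/set0Pn; exists s; by rewrite inE.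
have tU : t \in ~: U by rewrite inE; apply/bigcupP => -[C /and3P [_ /negP tC _]].
have inside : \sum_(v in U) indeg D' v <= \sum_(v in U) indeg D v.
  by apply: sum_bigcup_le; [apply: cotightU | apply: cotight_sum].
have outside : \sum_(v in ~: U) indeg D' v < \sum_(v in ~: U) indeg D v.
  apply: ltn_sum_cond tU deficit_t => v vU; have {}vU : v \notin U by rewrite -in_setC.
  by move: (surplus_in_U v); rewrite vU andbT -leqNgt.
have := sum_setC U (indeg D); have := sum_setC U (indeg D').
by rewrite !sum_indeg_total; lia.
Qed.

End Exchange.

Lemma indeg_shift1 s t D D1 : indeg_shift 1 s t D D1 ->
  forall v, indeg D1 v + (v == t) = indeg D v + (v == s).
Proof. by move=> sh v; have := sh v; rewrite !mul1n. Qed.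

Lemma fg_bounded_shift (f g : V -> option int) s t D D1 :
    fg_bounded ends f g D -> indeg_shift 1 s t D D1 ->
    upper_ok g s (indeg D1 s) -> lower_ok f t (indeg D1 t) ->
  fg_bounded ends f g D1.
Proof.
move=> bD /indeg_shift1 sh up_s low_t v; have [low up] := bD v; split.
- move: (sh v); case: eqVneq => [-> _ // | _ /= shv].
  by apply: lower_ok_mono low _; lia.
- move: (sh v); case: (eqVneq v s) => [-> _ // | _ /= shv].
  by apply: upper_ok_mono up _; lia.
Qed.

Lemma kec_reverse k D s t p : dipath D s t p -> k_edge_connected ends k D ->
  local_conn D k.+1 s t -> k_edge_connected ends k (flip D [set e in p]).
Proof.
move=> dp kD conn X X0 XT; change (k <= ent (flip D [set e in p]) X).
have : k <= ent D X := kD X X0 XT; have := ent_reverse X dp.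
have [tX | tX] := boolP (t \in X); have [sX | sX] := boolP (s \in X) => /=; try lia.
by have := conn X tX sX; lia.
Qed.

Section Improvement.
Variables (k : nat) (f g : V -> option int).
Local Notation feasible := (feasible ends k f g).
Local Notation degseq := (degseq ends).

Definition improving D s t :=
  [/\ indeg D s + 2 <= indeg D t, above_f f t (indeg D t), below_g g s (indeg D s)
    & arc_disjoint_paths ends D k.+1 s t].

Lemma feasible_reverse D s t p : feasible D -> dipath D s t p -> local_conn D k.+1 s t ->
    upper_ok g s (indeg (flip D [set e in p]) s) ->
    lower_ok f t (indeg (flip D [set e in p]) t) ->
  feasible (flip D [set e in p]).
Proof.
case=> kD bD dp conn up low.
by split; [apply: kec_reverse dp kD conn | apply: fg_bounded_shift (indeg_reverse dp) up low].
Qed.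

Lemma improving_not_decmin D s t : feasible D -> improving D s t ->
  exists2 D1, feasible D1 & ~~ lexle (degseq D) (degseq D1).
Proof.
move=> fD [gap above_t below_s paths].
have s_neq_t : s != t by apply: contraTneq gap => ->; lia.
have [P [dP _]] := paths; have sh := indeg_shift1 (indeg_reverse (dP ord0)).
have := sh s; have := sh t; rewrite !eqxx eq_sym (negbTE s_neq_t) => sh_t sh_s.
exists (flip D [set e in P ord0]); last exact: sort_shift_lt sh s_neq_t gap.
apply: feasible_reverse (dP ord0) (local_conn_of_paths paths) _ _ => //.
- by apply: upper_ok_mono (upper_ok_succ below_s) _; lia.
- by apply: lower_ok_mono (lower_ok_pred above_t) _; lia.
Qed.

Lemma exists_deficit D D' : ~~ lexle (degseq D) (degseq D') ->
  exists t, indeg D' t < indeg D t.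
Proof.
move=> not_le; apply/existsP; apply: contraNT not_le => /existsPn no_deficit.
have le_D v : indeg D v <= indeg D' v by rewrite leqNgt no_deficit.
suff eq_D : indeg D =1 indeg D' by rewrite /Defs.degseq (eq_map eq_D) lexle_refl.
move=> v; apply/eqP; rewrite eqn_leq le_D leqNgt; apply/negP => lt_v.
have := ltn_sum_cond (P := fun _ => true) (fun v _ => le_D v) isT lt_v.
by rewrite !sum_indeg_total ltnn.
Qed.

Lemma decmin_step D D' : feasible D -> ~ (exists s t, improving D s t) ->
    feasible D' -> ~~ lexle (degseq D) (degseq D') ->
  exists2 D'', feasible D'' &
    l1_dist (indeg D) (indeg D'') < l1_dist (indeg D) (indeg D') /\
    lexle (degseq D'') (degseq D').
Proof.
move=> [kD bD] no_improving [kD' bD'] not_le.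
have [t0 deficit_t0] := exists_deficit not_le.
have [t deficit_t t_max] :=
  @arg_maxnP _ t0 (fun v => indeg D' v < indeg D v) (indeg D) deficit_t0.
have [s surplus_s conn_st] := exists_surplus_source kD kD' deficit_t.
have no_gap : indeg D t < indeg D s + 2.
  rewrite ltnNge; apply/negP => gap; apply: no_improving; exists s, t; split=> //.
  - exact: above_f_lt (bD' t).1 deficit_t.
  - exact: below_g_lt (bD' s).2 surplus_s.
  - exact: paths_of_local_conn.
have [t' deficit_t' conn_t's] := exists_surplus_source kD' kD surplus_s.
have t'_below_s : indeg D' t' < indeg D' s.
  by rewrite ltnNge; apply/negP => le_st'; have := t_max t' deficit_t'; lia.
have t'_neq_s : t' != s by apply: contraTneq t'_below_s => ->; lia.
have [P [dP _]] := paths_of_local_conn conn_t's.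
have sh := indeg_shift1 (indeg_reverse (dP ord0)).
have := sh s; have := sh t'.
rewrite !eqxx (negbTE t'_neq_s) eq_sym (negbTE t'_neq_s) => sh_t' sh_s.
exists (flip D' [set e in P ord0]); last first.
  by split; [apply: l1_dist_shift_lt sh _ _ | apply: sort_shift_le sh _ _].
apply: feasible_reverse (dP ord0) conn_t's _ _ => //.
- by apply: upper_ok_mono (bD t').2 _; lia.
- by apply: lower_ok_mono (bD s).1 _; lia.
Qed.

Lemma decmin_of_no_improving D : feasible D -> ~ (exists s t, improving D s t) ->
  decmin ends k f g D.
Proof.
move=> fD no_improving; split=> // D'.
have [n] := ubnP (l1_dist (indeg D) (indeg D')); elim: n D' => // n IH D' dist_D' fD'.
apply/negPn/negP => not_le.
have [D'' fD'' [dist_D'' le_D'']] := decmin_step fD no_improving fD' not_le.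
by case/negP: not_le; apply: lexle_trans (IH _ _ fD'') le_D''; apply: leq_trans dist_D'' _.
Qed.

End Improvement.

End Orientations.

Theorem theorem6p8 (V E : finType) (ends : E -> V * V) (k : nat)
  (f g : V -> option int) (D : {ffun E -> bool}) :
  0 < k -> f_le_g f g -> feasible ends k f g D ->
  (decmin ends k f g D <->
   ~ (exists s t : V,
        [/\ indeg ends D s + 2 <= indeg ends D t,
            above_f f t (indeg ends D t),
            below_g g s (indeg ends D s)
            & arc_disjoint_paths ends D k.+1 s t])).
Proof.
move=> _ _ fD; split; last exact: decmin_of_no_improving.
case=> _ minimal [s [t improving_st]].
have [D1 fD1 lt_D1] := improving_not_decmin fD improving_st.
by move/negP: lt_D1; apply; apply: minimal.
Qed.
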